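(* Let $0<q<1$. Define the $q$-Hermite polynomials $H_{n,q}(x)$ by \[ H_q(t)\,e_q(tx)=\sum_{n=0}^\infty H_{n,q}(x)\frac{t^n}{[n]_q!},\qquad H_q(t)=\sum_{n=0}^\infty(-1)^nq^{n(n-1)}\frac{t^{2n}}{[2n]_q!!}. \] Then for every integer $n\ge0$, $H_{n,q}(x)$ satisfies the $q$-difference equation \[ q^{n-2}D_{q,x}^2H_{n,q}(x)-xq^nD_{q,x}H_{n,q}(x)+[n]_qH_{n,q}(qx)=0. \]
   Context: $[n]_q=\frac{1-q^n}{1-q}$, $[0]_q!=1$, $[n]_q!=[n]_q\cdots[1]_q$, $[0]_q!!=1$, $[2n]_q!!=[2n]_q[2n-2]_q\cdots[2]_q$, $e_q(t)=\sum_{n\ge0}\frac{t^n}{[n]_q!}$. The $q$-derivative is $D_{q,x}f(x)=\frac{f(qx)-f(x)}{(q-1)x}$ (on polynomials $D_{q,x}x^n=[n]_qx^{n-1}$), and $D_{q,x}^2=D_{q,x}\circ D_{q,x}$. *)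

From HB Require Import structures.
From mathcomp Require Import all_boot all_order all_algebra.
Set Implicit Arguments. Unset Strict Implicit. Unset Printing Implicit Defensive.
Import Order.TTheory GRing.Theory Num.Theory.
Local Open Scope ring_scope.

Section QDefs.
Variable R : realFieldType.
Variable q : R.

Definition qint (n : nat) : R := (1 - q ^+ n) / (1 - q).

Definition qfact (n : nat) : R := \prod_(i < n) qint i.+1.

(* [2n]_q!! = [2n]_q [2n-2]_q ... [2]_q, [0]_q!! = 1 *)
Definition qdfact2 (n : nat) : R := \prod_(i < n) qint (2 * i.+1).

(* coefficient of t^m in H_q(t) = sum_k (-1)^k q^{k(k-1)} t^{2k} / [2k]_q!! *)
Definition Hq_coef (m : nat) : R :=
  if odd m then 0
  else (-1) ^+ (m./2) * q ^+ (m./2 * (m./2).-1) / qdfact2 (m./2).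

(* H_{n,q}(x): defined by H_q(t) e_q(tx) = sum_n H_{n,q}(x) t^n/[n]_q!
   (identity of formal power series in t), i.e. H_{n,q}(x)/[n]_q! is the
   Cauchy-product coefficient sum_{i+j=n} Hq_coef i * x^j/[j]_q!. *)
Definition qHermite (n : nat) : {poly R} :=
  qfact n *: \sum_(i < n.+1) ((Hq_coef i / qfact (n - i)) *: 'X^(n - i)).

(* q-derivative on polynomials: D_{q,x} x^n = [n]_q x^{n-1} (linearly extended) *)
Definition Dq (p : {poly R}) : {poly R} :=
  \poly_(i < (size p).-1) (qint i.+1 * p`_i.+1).

End QDefs.

From HB Require Import structures.
From mathcomp Require Import all_boot all_order all_algebra.
From mathcomp Require Import zify ring.
Import Order.TTheory GRing.Theory Num.Theory.
Set Implicit Arguments. Unset Strict Implicit. Unset Printing Implicit Defensive.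
Local Open Scope ring_scope.

(* Write h_j for the coefficient of x^j in H_{n,q} and c_m for the coefficient
   of t^m in H_q(t), so that [j]_q! h_j = [n]_q! c_(n-j).  Comparing
   coefficients of x^j, with n = j + d, and multiplying by [j]_q!, the equation
   becomes  q^(n-2) c_(d-2) + q^j [d]_q c_d = 0,  because
   [j+1]_q [j+2]_q [j]_q! = [j+2]_q!  and  [n]_q q^j - q^n [j]_q = q^j [d]_q.
   This is exactly the two-term recurrence [d]_q c_d = - q^(d-2) c_(d-2) of
   the series H_q(t), plus c_1 = 0 for the cases d < 2. *)

Section Dilation.
Variable R : comNzRingType.

Definition dilate (c : R) (p : {poly R}) : {poly R} :=
  \poly_(i < size p) (c ^+ i * p`_i).

Lemma coef_dilate c p i : (dilate c p)`_i = c ^+ i * p`_i.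
Proof.
rewrite coef_poly; case: ltnP => // hi.
by rewrite nth_default ?mulr0.
Qed.

Lemma horner_dilate c p x : (dilate c p).[x] = p.[c * x].
Proof.
rewrite (horner_coef_wide _ (size_poly _ _)) horner_coef.
by apply: eq_bigr => i _; rewrite coef_dilate exprMn mulrCA mulrA.
Qed.

End Dilation.

Section QCalculus.
Variable R : realFieldType.
Variable q : R.

Lemma qint0 : qint q 0 = 0.
Proof. by rewrite /qint expr0 subrr mul0r. Qed.

Lemma qintD m n : qint q (m + n) = qint q m + q ^+ m * qint q n.
Proof. by rewrite /qint exprD; ring. Qed.

Lemma qint_shift j d :
  qint q (j + d) * q ^+ j - q ^+ (j + d) * qint q j = q ^+ j * qint q d.
Proof. by rewrite {1}addnC qintD exprD; ring. Qed.

Lemma Hq_coef1 : Hq_coef q 1 = 0.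
Proof. by []. Qed.

Lemma qfactS n : qfact q n.+1 = qfact q n * qint q n.+1.
Proof. by rewrite /qfact big_ord_recr. Qed.

Lemma coef_Dq p i : (Dq q p)`_i = qint q i.+1 * p`_i.+1.
Proof.
rewrite /Dq coef_poly; case: ltnP => // h.
by rewrite nth_default ?mulr0 //; move: h; case: (size p).
Qed.

Lemma coef_XDq p i : ('X * Dq q p)`_i = qint q i * p`_i.
Proof. by rewrite coefXM; case: i => [|i]; rewrite ?qint0 ?mul0r ?coef_Dq. Qed.

Lemma coef_qHermite n j : (qHermite q n)`_j =
  if (j <= n)%N then qfact q n * Hq_coef q (n - j) / qfact q j else 0.
Proof.
rewrite /qHermite coefZ coef_sum.
under eq_bigr do rewrite coefZ coefXn.
case: leqP => hj.
  have hi : (n - j < n.+1)%N by lia.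
  rewrite (bigD1 (Ordinal hi)) //= subKn // eqxx mulr1.
  rewrite big1 ?addr0 ?mulrA //.
  move=> i /eqP hne; case: eqP => [e|]; last by rewrite mulr0.
  by exfalso; apply: hne; apply: val_inj => /=; have := ltn_ord i; lia.
rewrite big1 ?mulr0 // => i _; case: eqP => [e|]; last by rewrite mulr0.
by exfalso; have := ltn_ord i; lia.
Qed.

Lemma qdfact2S n : qdfact2 q n.+1 = qdfact2 q n * qint q (2 * n.+1).
Proof. by rewrite /qdfact2 big_ord_recr. Qed.

Hypotheses (hq0 : 0 < q) (hq1 : q < 1).

Lemma qint_neq0 n : (0 < n)%N -> qint q n != 0.
Proof.
move=> hn; rewrite /qint mulf_neq0 ?invr_eq0 ?subr_eq0 1?eq_sym ?lt_eqF //.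
by rewrite exprn_ilt1 ?ltW //; lia.
Qed.

Lemma qfact_neq0 n : qfact q n != 0.
Proof. by rewrite /qfact prodf_seq_neq0; apply/allP => i _; apply: qint_neq0. Qed.

Lemma qdfact2_neq0 n : qdfact2 q n != 0.
Proof.
by rewrite /qdfact2 prodf_seq_neq0; apply/allP => i _; apply: qint_neq0; lia.
Qed.

Lemma qint_Hq_coefSS d : qint q d.+2 * Hq_coef q d.+2 = - q ^+ d * Hq_coef q d.
Proof.
rewrite /Hq_coef /=; case: (boolP (odd d)) => hd /=; first by rewrite !mulr0.
have [k ->] : exists k, d = k.*2.
  by exists d./2; rewrite -[LHS](odd_double_half d) (negbTE hd).
rewrite doubleK /=; have -> : k.*2.+2 = (2 * k.+1)%N by lia.
have hk : qint q (2 * k.+1) != 0 by apply: qint_neq0; lia.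
have -> : (k.+1 * k = k * k.-1 + k.*2)%N by case: k {hk} => // k; lia.
rewrite qdfact2S exprS exprD; field.
by rewrite hk qdfact2_neq0.
Qed.

Lemma qfact_coef_qHermite n j :
  (j <= n)%N -> qfact q j * (qHermite q n)`_j = qfact q n * Hq_coef q (n - j).
Proof. by move=> hj; rewrite coef_qHermite hj mulrC divfK ?qfact_neq0. Qed.

Lemma qHermite_qdiff_eq n :
  q ^ (n%:Z - 2) *: Dq q (Dq q (qHermite q n))
  - q ^+ n *: ('X * Dq q (qHermite q n)) + qint q n *: dilate q (qHermite q n) = 0.
Proof.
apply/polyP => j; rewrite coef0 !coefD coefN !coefZ !coef_Dq coef_XDq coef_dilate.
have [hnj | hjn] := ltnP n j.
  rewrite !coef_qHermite ifN ?ifN; try lia.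
  by rewrite !mulr0 subrr addr0.
have [d ->] : exists d, n = (j + d)%N by exists (n - j)%N; lia.
apply: (mulfI (qfact_neq0 j)); rewrite mulr0.
set H := qHermite q (j + d).
have -> : qfact q j * (q ^ ((j + d)%:Z - 2) * (qint q j.+1 * (qint q j.+2 * H`_j.+2))
    - q ^+ (j + d) * (qint q j * H`_j) + qint q (j + d) * (q ^+ j * H`_j))
  = q ^ ((j + d)%:Z - 2) * (qfact q j.+2 * H`_j.+2)
    + q ^+ j * qint q d * (qfact q j * H`_j).
  by rewrite !qfactS -qint_shift; ring.
rewrite (qfact_coef_qHermite (leq_addr d j)) addKn.
rewrite {}/H; case: d => [|[|d]].
- rewrite coef_qHermite ifN ?qint0; last by lia.
  by rewrite !mulr0 mul0r add0r.
- rewrite coef_qHermite ifN; last by lia.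
  by rewrite Hq_coef1 !mulr0 add0r.
rewrite qfact_coef_qHermite; last by lia.
have -> : (j + d.+2 - j.+2 = d)%N by lia.
have -> : (j + d.+2)%:Z - 2 = (j + d)%N :> int by lia.
rewrite -exprnP exprD.
by rewrite [q ^+ j * _ * _]mulrACA qint_Hq_coefSS; ring.
Qed.

End QCalculus.

Theorem theorem11 (R : realFieldType) (q : R) (hq0 : 0 < q) (hq1 : q < 1)
  (n : nat) (x : R) :
  q ^ (n%:Z - 2) * (Dq q (Dq q (qHermite q n))).[x]
  - x * q ^+ n * (Dq q (qHermite q n)).[x]
  + qint q n * (qHermite q n).[q * x] = 0.
Proof.
move: (qHermite_qdiff_eq hq0 hq1 n); move: (qHermite q n) => H.
move/(congr1 (horner^~ x)); rewrite /= !(hornerD, hornerN, hornerZ) hornerM.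
by rewrite hornerX horner_dilate horner0 mulrA [q ^+ n * x]mulrC.
Qed.
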